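(* Let $K$ be a finite simplicial complex, $f$ an injective filtration function on $K$, and $n$ a positive integer. Assume $[a,b)$ (with $b$ finite) is a bar of the persistence module $\{H_n(K^f_r)\}_{r\in\mathbb{R}}$ represented by a class $[\alpha]\in H_n(K^f_a)$ born at $a$ and terminated at $b$, where $\alpha$ is an $n$-cycle. Choose $\varepsilon<(b-a)/4$ and assume that every other bar $[a_i,b_i)$ of $\{H_n(K^f_r)\}_{r\in\mathbb{R}}$ satisfies $a_i>a+2\varepsilon$ or $b_i<b-2\varepsilon$. Let $g$ be an injective filtration function with $\|f-g\|_\infty\le\varepsilon$, and assume that a matching of barcodes as in the stability theorem (see context) matches the bar $[a,b)$ to a bar $[a',b')$ of $\{H_n(K^g_r)\}_{r\in\mathbb{R}}$. Then: (1) the class of $\alpha$ in $\{H_n(K^g_r)\}_{r\in\mathbb{R}}$ terminates at $b'$; (2) if $\varepsilon\le\frac12\min\{R_u,R_l\}$, where $R_u=\min\{|f(\tau)-b|: \tau\text{ a birth }(n+1)\text{-simplex with } f(\tau)>b\}$ (or $\infty$ if none) and $R_l=\min\{|f(\tau)-b|: \tau\text{ a terminal }(n+1)\text{-simplex with } f(\tau)<b\}$ (or $\infty$ if none), then the simplex of $K$ terminating the bar $[a,b)$ in $K^f$ (the simplex with $f$-value $b$) is the same as the simplex terminating the bar $[a',b')$ in $K^g$ (the simplex with $g$-value $b'$).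
   Context: A filtration function on a finite simplicial complex $K$ is a map $f\colon K\to\mathbb{R}$ with $f(\sigma)\le f(\tau)$ whenever $\sigma$ is a face of $\tau$. Sublevel complexes are $K^f_r=f^{-1}((-\infty,r])$; homology is with coefficients in a fixed field $\mathbb{F}$, and $\{H_n(K^f_r)\}_r$ with inclusion-induced maps is a persistence module, decomposing as a finite direct sum of interval modules $\mathbb{F}_{[a_i,b_i)}$; the multiset of intervals is the barcode, its elements are bars. For a nontrivial class $[\alpha]\in H_n(K^f_r)$, its birth is the infimum of $q\le r$ such that $[\alpha]$ is in the image of $H_n(K^f_q)\to H_n(K^f_r)$ and its termination scale is the infimum of $q\ge r$ such that $[\alpha]$ maps to $0$ in $H_n(K^f_q)$. Since $f$ is injective, each simplex is either a birth simplex (adding it creates a new nontrivial homology class) or a terminal simplex (adding it makes a nontrivial homology class trivial). $\|f-g\|_\infty=\max_{\sigma\in K}|f(\sigma)-g(\sigma)|$. If $\|f-g\|_\infty\le\varepsilon$, with barcodes $\{[a_i,b_i)\}_{i\in I}$ of $f$ and $\{[a'_j,b'_j)\}_{j\in J}$ of $g$ in degree $n$, a matching as in the stability theorem is a bijection $\varphi\colon I'\to J'$ between subsets $I'\subseteq I$, $J'\subseteq J$ with $|a_i-a'_{\varphi(i)}|\le\varepsilon$ and $|b_i-b'_{\varphi(i)}|\le\varepsilon$ for $i\in I'$, $|a_i-b_i|\le2\varepsilon$ for $i\in I\setminus I'$ and $|a'_j-b'_j|\le2\varepsilon$ for $j\in J\setminus J'$ (such a matching exists by the stability theorem). *)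

From HB Require Import structures.
From mathcomp Require Import all_boot all_order all_algebra.
From mathcomp Require Import reals.
Set Implicit Arguments. Unset Strict Implicit. Unset Printing Implicit Defensive.
Import Order.TTheory GRing.Theory Num.Theory.
Local Open Scope ring_scope.

Section Simplicial.
Variables (V : finType) (F : fieldType) (R : realType).

Definition simplicial_complex (K : {set {set V}}) : Prop :=
  set0 \notin K /\
  forall s t : {set V}, s \in K -> t \subset s -> t != set0 -> t \in K.

Definition filtration (K : {set {set V}}) (f : {set V} -> R) : Prop :=
  forall s t : {set V}, s \in K -> t \in K -> t \subset s -> f t <= f s.

Definition injective_filtration (K : {set {set V}}) (f : {set V} -> R) : Prop :=
  filtration K f /\ {in K &, injective f}.

Definition sup_dist_le (K : {set {set V}}) (f g : {set V} -> R) (eps : R) : Prop :=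
  forall s, s \in K -> `|f s - g s| <= eps.

(* Simplicial chains with coefficients in F (finitely supported functions on
   vertex sets); an n-simplex is a vertex set of cardinality n+1. *)
Local Notation chain := {ffun {set V} -> F}.

(* Orientation: vertices are ordered by enum_rank; the incidence coefficient
   [s : t] for t = s minus its i-th vertex is (-1)^i. *)
Definition incidence (s t : {set V}) : F :=
  if (t \subset s) && (#|s :\: t| == 1%N) then
    \sum_(v in s :\: t)
       (-1) ^+ #|[set w in s | (enum_rank w < enum_rank v)%N]|
  else 0.

Definition bd (c : chain) : chain :=
  [ffun t => \sum_(s : {set V}) c s * incidence s t].

(* c is an n-chain of the subcomplex {s in K | P (f s)} (P describes a
   sublevel set, e.g. (fun x => x <= r) for K^f_r). *)
Definition sub_chain (K : {set {set V}}) (f : {set V} -> R) (P : R -> bool)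
    (n : nat) (c : chain) : Prop :=
  forall s, c s != 0 -> [/\ s \in K, #|s| = n.+1 & P (f s)].

Definition cycle_in K f P n (c : chain) : Prop :=
  sub_chain K f P n c /\ bd c = 0.

Definition boundary_in K f P n (z : chain) : Prop :=
  exists c : chain, sub_chain K f P n.+1 c /\ bd c = z.

Definition le_at (r : R) : R -> bool := fun x => x <= r.
Definition lt_at (r : R) : R -> bool := fun x => x < r.

Definition is_inf (S : R -> Prop) (t : R) : Prop :=
  (forall q, S q -> t <= q) /\ (forall e, 0 < e -> exists q, S q /\ q < t + e).

(* Birth of the class [alpha] in H_n(K^f_r): infimum of q <= r such that
   [alpha] lies in the image of H_n(K^f_q) -> H_n(K^f_r). *)
Definition birth_scale K f n (r : R) (alpha : chain) (t : R) : Prop :=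
  is_inf (fun q => q <= r /\
     exists beta, cycle_in K f (le_at q) n beta /\
                  boundary_in K f (le_at r) n (alpha - beta)) t.

Definition term_scale K f n (r : R) (alpha : chain) (t : R) : Prop :=
  is_inf (fun q => r <= q /\ boundary_in K f (le_at q) n alpha) t.

(* Extended death values: None stands for +oo. *)
Definition alive_end (d : option R) (r : R) : bool :=
  if d is Some y then r < y else true.

(* Interval decomposition of the persistence module {H_n(K^f_r)}_r into
   interval modules F_[birth i, death i), i < m, the summand i being
   spanned by the images of the class of the cycle rep i. *)
Definition interval_decomposition K f n (m : nat) (birth : 'I_m -> R)
    (death : 'I_m -> option R) (rep : 'I_m -> chain) : Prop :=
  (forall i, cycle_in K f (le_at (birth i)) n (rep i) /\
     (if death i is Some d then birth i < d /\ boundary_in K f (le_at d) n (rep i)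
      else True)) /\
  (forall r : R,
     let alive i := (birth i <= r) && alive_end (death i) r in
     (* the classes of the alive representatives are linearly independent
        in H_n(K^f_r) ... *)
     (forall c : 'I_m -> F,
        boundary_in K f (le_at r) n [ffun s => \sum_(i | alive i) c i * rep i s] ->
        forall i, alive i -> c i = 0) /\
     (* ... and span H_n(K^f_r). *)
     (forall z, cycle_in K f (le_at r) n z ->
        exists c : 'I_m -> F,
          boundary_in K f (le_at r) n (z - [ffun s => \sum_(i | alive i) c i * rep i s]))).

Definition close_end (d d' : option R) (eps : R) : Prop :=
  match d, d' with
  | Some x, Some y => `|x - y| <= eps
  | None, None => True
  | _, _ => False
  end.

Definition short_bar (a : R) (d : option R) (eps : R) : Prop :=
  if d is Some x then `|a - x| <= 2 * eps else False.

Definition stability_matching (eps : R) (m m' : nat)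
    (birth : 'I_m -> R) (death : 'I_m -> option R)
    (birth' : 'I_m' -> R) (death' : 'I_m' -> option R)
    (phi : 'I_m -> option 'I_m') : Prop :=
  [/\ (forall i i' j, phi i = Some j -> phi i' = Some j -> i = i'),
      (forall i j, phi i = Some j ->
         `|birth i - birth' j| <= eps /\ close_end (death i) (death' j) eps),
      (forall i, phi i = None -> short_bar (birth i) (death i) eps) &
      (forall j, (forall i, phi i <> Some j) -> short_bar (birth' j) (death' j) eps)].

(* s is a birth simplex: adding it (to K^f_{<f s}) creates a new nontrivial
   homology class (in degree dim s). *)
Definition birth_simplex (K : {set {set V}}) (f : {set V} -> R) (s : {set V}) : Prop :=
  s \in K /\
  exists z, cycle_in K f (le_at (f s)) #|s|.-1 z /\
    ~ exists beta, cycle_in K f (lt_at (f s)) #|s|.-1 beta /\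
                   boundary_in K f (le_at (f s)) #|s|.-1 (z - beta).

(* s is a terminal simplex: adding it makes a nontrivial homology class
   (in degree dim s - 1) trivial. *)
Definition terminal_simplex (K : {set {set V}}) (f : {set V} -> R) (s : {set V}) : Prop :=
  s \in K /\
  exists z, cycle_in K f (lt_at (f s)) #|s|.-2 z /\
    ~ boundary_in K f (lt_at (f s)) #|s|.-2 z /\
    boundary_in K f (le_at (f s)) #|s|.-2 z.

End Simplicial.

(* (1) Write alpha, at its entry scale r <= a + eps in the filtration by g, in
   the interval decomposition of {H_n(K^g_r)}: its class dies exactly at the
   latest death d among the bars carrying it. That bar is born by a + eps and,
   as alpha bounds in K^f no earlier than b, dies at d >= b - eps. So it is
   longer than 2 eps, hence matched to a bar of f born by a + 2 eps and dying
   after b - 2 eps, which can only be [a, b): d = b'.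
   (2) Let e be an (n+1)-chain of K^f_b bounding alpha and sigma its f-latest
   simplex, so that f sigma = b. The simplices of e coming after sigma in g
   lie less than 2 eps below b in f, hence are not terminal and can be traded
   for f-earlier ones: alpha bounds in K^g_{g sigma}. Conversely, the f-latest
   simplex of a chain bounding alpha in K^g_q, q < g sigma, lies less than
   2 eps above b and would be a birth simplex. So alpha terminates at g sigma
   in K^g, and g sigma = b' by (1). *)

From HB Require Import structures.
From mathcomp Require Import all_boot all_order all_algebra.
From mathcomp Require Import reals.
From mathcomp Require Import ring lra.
From Stdlib Require Import Classical.
Import Order.TTheory GRing.Theory Num.Theory.
Set Implicit Arguments. Unset Strict Implicit. Unset Printing Implicit Defensive.
Local Open Scope ring_scope.

Lemma exists_arg_max (disp : Order.disp_t) (O : orderType disp) (T : finType)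
    (P : pred T) (h : T -> O) :
  (exists x, P x) -> exists2 x, P x & forall y, P y -> (h y <= h x)%O.
Proof. by case=> x0 Px0; case: (arg_maxP h Px0) => x Px xmax; exists x. Qed.

Section Chains.
Variables (V : finType) (F : fieldType).
Local Notation chain := {ffun {set V} -> F}.

Fact bd_is_zmod_morphism : zmod_morphism (@bd V F).
Proof.
move=> x y; apply/ffunP => t; rewrite !ffunE -sumrB.
by apply: eq_bigr => s _; rewrite !ffunE mulrBl.
Qed.

HB.instance Definition _ :=
  GRing.isZmodMorphism.Build chain chain (@bd V F) bd_is_zmod_morphism.

Definition chain_scale (k : F) (x : chain) : chain := [ffun s => k * x s].

Lemma chain_scale0 (x : chain) : chain_scale 0 x = 0.
Proof. by apply/ffunP => s; rewrite !ffunE mul0r. Qed.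

Lemma bd_scale k (x : chain) : bd (chain_scale k x) = chain_scale k (bd x).
Proof.
apply/ffunP => t; rewrite !ffunE mulr_sumr.
by apply: eq_bigr => s _; rewrite ffunE mulrA.
Qed.

Lemma combination_sum (I : finType) (P : pred I) (c : I -> F) (x : I -> chain) :
  [ffun s => \sum_(i | P i) c i * x i s] = \sum_(i | P i) chain_scale (c i) (x i).
Proof. by apply/ffunP => s; rewrite ffunE sum_ffunE; apply: eq_bigr => i _; rewrite ffunE. Qed.

Lemma support_neq0 (x : chain) : x != 0 -> exists s, x s != 0.
Proof.
move=> x0; apply/existsP; apply: contraNT x0 => /existsPn x0.
by apply/eqP/ffunP => s; rewrite ffunE; apply/eqP/negPn/x0.
Qed.

Definition simplex_chain (rho : {set V}) : chain := [ffun s => (s == rho)%:R].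

Lemma bd_simplex_chain rho t : bd (simplex_chain rho) t = incidence F rho t.
Proof.
rewrite ffunE (bigD1 rho) //= ffunE eqxx mul1r big1 ?addr0 // => s /negbTE sr.
by rewrite ffunE sr mul0r.
Qed.

Definition vertex_rank (s : {set V}) (v : V) :=
  #|[set w in s | (enum_rank w < enum_rank v)%N]|.

Lemma incidence_setD1 (s : {set V}) v :
  v \in s -> incidence F s (s :\ v) = (-1) ^+ vertex_rank s v.
Proof.
move=> vs; rewrite /incidence subsetDl /=.
have -> : s :\: (s :\ v) = [set v].
  by apply/setP => w; rewrite !inE; case: eqVneq => [->|_]; [rewrite vs | case: (w \in s)].
by rewrite cards1 eqxx big_set1.
Qed.

Lemma incidence_neq0 (s t : {set V}) :
  incidence F s t != 0 -> exists2 v, v \in s & t = s :\ v.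
Proof.
rewrite /incidence; case: andP => [[ts /cards1P [v sv]] _|]; last by rewrite eqxx.
have /setDP [vs _] : v \in s :\: t by rewrite sv set11.
by exists v; rewrite // -sv setDDr setDv set0U; apply/esym/setIidPr.
Qed.

Lemma sum_incidence (G : {set V} -> F) s :
  \sum_t incidence F s t * G t = \sum_(v in s) (-1) ^+ vertex_rank s v * G (s :\ v).
Proof.
rewrite (bigID (mem [set s :\ v | v in s])) /= [X in _ + X]big1 ?addr0.
  rewrite big_imset /=; first by apply: eq_bigr => v vs; rewrite incidence_setD1.
  move=> v w vs ws /= vw; have : v \notin s :\ v by rewrite in_setD1 eqxx.
  by rewrite vw in_setD1 vs andbT negbK => /eqP.
move=> t /negP nt; have [->|/incidence_neq0 [v vs tv]] := eqVneq (incidence F s t) 0.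
  by rewrite mul0r.
by case: nt; rewrite tv; apply/imsetP; exists v.
Qed.

Lemma vertex_rank_setD1_lt (s : {set V}) v w :
  v \in s -> (enum_rank v < enum_rank w)%N -> vertex_rank s w = (vertex_rank (s :\ v) w).+1.
Proof.
move=> vs vw; rewrite /vertex_rank (cardsD1 v) inE vs vw add1n.
by congr _.+1; apply: eq_card => x; rewrite !inE andbA.
Qed.

Lemma vertex_rank_setD1_gt (s : {set V}) v w :
  (enum_rank w < enum_rank v)%N -> vertex_rank (s :\ v) w = vertex_rank s w.
Proof.
move=> wv; apply: eq_card => x; rewrite !inE.
by case: eqVneq => [->|] //=; rewrite ltnNge (ltnW wv) andbF.
Qed.

Lemma setD1C (s : {set V}) v w : s :\ v :\ w = s :\ w :\ v.
Proof. by rewrite !setDDl setUC. Qed.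

(* The face s - {v, w} is reached through s - {v} and through s - {w},
   with opposite signs. *)
Lemma incidence_incidence (s u : {set V}) :
  \sum_t incidence F s t * incidence F t u = 0.
Proof.
rewrite sum_incidence.
have [/existsP [v /existsP [w /and4P [vs ws vw /eqP ->]]]|] := boolP [exists v, exists w,
    [&& v \in s, w \in s, (enum_rank v < enum_rank w)%N & u == s :\ v :\ w]].
  have wv : w != v by apply: contraTneq vw => ->; rewrite ltnn.
  rewrite (bigD1 v) //= (bigD1 w) /=; last by rewrite ws wv.
  rewrite big1 ?addr0; last first.
    move=> x /andP [/andP [xs xv] xw].
    have [->|/incidence_neq0 [y _ uy]] := eqVneq (incidence F (s :\ x) (s :\ v :\ w)) 0.
      by rewrite mulr0.
    have : x \in s :\ v :\ w by rewrite !in_setD1 xs xv xw.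
    by rewrite uy !in_setD1 eqxx andbF.
  rewrite incidence_setD1 ?in_setD1 ?wv // setD1C incidence_setD1; last first.
    by rewrite in_setD1 eq_sym wv.
  by rewrite (vertex_rank_setD1_lt vs vw) (vertex_rank_setD1_gt _ vw) exprS; ring.
move=> /existsPn no_pair; rewrite big1 // => v vs.
have [->|/incidence_neq0 [w]] := eqVneq (incidence F (s :\ v) u) 0; first by rewrite mulr0.
rewrite in_setD1 => /andP [wv ws] hu.
case: (ltngtP (enum_rank v) (enum_rank w)) => [vw|wv'|/ord_inj/enum_rank_inj eq_vw].
- by move: (no_pair v) => /existsPn/(_ w); rewrite vs ws vw hu eqxx.
- by move: (no_pair w) => /existsPn/(_ v); rewrite vs ws wv' hu setD1C eqxx.
- by rewrite eq_vw eqxx in wv.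
Qed.

Lemma bd_bd (c : chain) : bd (bd c) = 0.
Proof.
apply/ffunP => u; rewrite !ffunE.
under eq_bigr do rewrite ffunE mulr_suml.
rewrite exchange_big big1 // => s _.
by under eq_bigr do rewrite -mulrA; rewrite -mulr_sumr incidence_incidence mulr0.
Qed.

End Chains.

Section Subcomplex.
Variables (V : finType) (F : fieldType) (R : realType).
Variables (K : {set {set V}}) (f : {set V} -> R).
Local Notation chain := {ffun {set V} -> F}.
Implicit Types (P Q : R -> bool) (x y : chain).

Lemma sub_chain0 P k : sub_chain K f P k (0 : chain).
Proof. by move=> s; rewrite ffunE eqxx. Qed.

Lemma sub_chainD P k x y :
  sub_chain K f P k x -> sub_chain K f P k y -> sub_chain K f P k (x + y).
Proof.
move=> hx hy s; rewrite ffunE; have [x0|/hx //] := eqVneq (x s) 0.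
by rewrite x0 add0r => /hy.
Qed.

Lemma sub_chain_scale P k c x : sub_chain K f P k x -> sub_chain K f P k (chain_scale c x).
Proof.
by move=> hx s; rewrite ffunE; have [->|/hx //] := eqVneq (x s) 0; rewrite mulr0 eqxx.
Qed.

Lemma sub_chainB P k x y :
  sub_chain K f P k x -> sub_chain K f P k y -> sub_chain K f P k (x - y).
Proof. by move=> hx hy; apply: sub_chainD => // s; rewrite ffunE oppr_eq0 => /hy. Qed.

Lemma sub_chainW P Q k x :
  (forall r, P r -> Q r) -> sub_chain K f P k x -> sub_chain K f Q k x.
Proof. by move=> PQ hx s /hx [? ? /PQ]. Qed.

Lemma sub_chain_simplex P k rho : rho \in K -> #|rho| = k.+1 -> P (f rho) ->
  sub_chain K f P k (simplex_chain F rho).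
Proof.
move=> rK cr Pr s; rewrite ffunE; case: (s =P rho) => [-> //|_].
by rewrite eqxx.
Qed.

Lemma boundary_in0 P k : boundary_in K f P k (0 : chain).
Proof. by exists 0; split; [apply: sub_chain0 | apply: raddf0]. Qed.

Lemma boundary_inD P k x y :
  boundary_in K f P k x -> boundary_in K f P k y -> boundary_in K f P k (x + y).
Proof.
case=> u [hu <-] [w [hw <-]]; exists (u + w).
by rewrite raddfD; split => //; apply: sub_chainD.
Qed.

Lemma boundary_inB P k x y :
  boundary_in K f P k x -> boundary_in K f P k y -> boundary_in K f P k (x - y).
Proof.
case=> u [hu <-] [w [hw <-]]; exists (u - w).
by rewrite raddfB; split => //; apply: sub_chainB.
Qed.

Lemma boundary_in_scale P k c x :
  boundary_in K f P k x -> boundary_in K f P k (chain_scale c x).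
Proof.
case=> u [hu <-]; exists (chain_scale c u).
by rewrite bd_scale; split => //; apply: sub_chain_scale.
Qed.

Lemma boundary_in_sum P k (I : finType) (J : pred I) (x : I -> chain) :
  (forall i, J i -> boundary_in K f P k (x i)) -> boundary_in K f P k (\sum_(i | J i) x i).
Proof. by apply: big_ind; [apply: boundary_in0 | apply: boundary_inD]. Qed.

Lemma boundary_in_le q q' k x : q <= q' ->
  boundary_in K f (le_at q) k x -> boundary_in K f (le_at q') k x.
Proof.
move=> qq' [u [hu <-]]; exists u; split => //.
by apply: sub_chainW hu => r; rewrite /le_at => /le_trans; apply.
Qed.

Lemma exists_top_simplex (g : {set V} -> R) P k x : sub_chain K g P k x -> x != 0 ->
  exists2 rho, x rho != 0 & sub_chain K f (le_at (f rho)) k x.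
Proof.
move=> hx /support_neq0 /(exists_arg_max f) [rho xrho rho_max]; exists rho => // s xs.
by have [sK cs _] := hx s xs; split => //; apply: rho_max.
Qed.

End Subcomplex.

Section SupDistance.
Variables (V : finType) (F : fieldType) (R : realType).
Variables (K : {set {set V}}) (f g : {set V} -> R) (eps : R).
Hypothesis fg : sup_dist_le K f g eps.
Local Notation chain := {ffun {set V} -> F}.

Lemma sup_dist_leC : sup_dist_le K g f eps.
Proof. by move=> s /fg; rewrite distrC. Qed.

Lemma sup_dist_le_bounds s : s \in K -> f s - eps <= g s <= f s + eps.
Proof. by move/fg; rewrite ler_norml => /andP [? ?]; apply/andP; split; lra. Qed.

Lemma sub_chain_shift q k (x : chain) :
  sub_chain K f (le_at q) k x -> sub_chain K g (le_at (q + eps)) k x.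
Proof.
move=> hx s /hx [sK cs]; rewrite /le_at => fs; split => //.
by have /andP [_] := sup_dist_le_bounds sK; lra.
Qed.

Lemma boundary_in_shift q k (x : chain) :
  boundary_in K f (le_at q) k x -> boundary_in K g (le_at (q + eps)) k x.
Proof. by case=> u [hu <-]; exists u; split => //; apply: sub_chain_shift. Qed.

End SupDistance.

Section Filtration.
Variables (V : finType) (F : fieldType) (R : realType).
Variables (K : {set {set V}}) (f : {set V} -> R).
Hypotheses (hK : simplicial_complex K) (hf : injective_filtration K f).
Local Notation chain := {ffun {set V} -> F}.

Lemma filtration_inj : {in K &, injective f}.
Proof. by case: hf. Qed.

Lemma incidence_face rho t : rho \in K -> (1 < #|rho|)%N -> incidence F rho t != 0 ->
  [/\ t \in K, #|t| = #|rho|.-1 & f t < f rho].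
Proof.
move=> rK rho1 /incidence_neq0 [v vrho ->].
have card_t : #|rho :\ v| = #|rho|.-1 by rewrite (cardsD1 v rho) vrho.
have tK : rho :\ v \in K.
  case: hK => _ /(_ rho (rho :\ v) rK (subsetDl _ _)); apply.
  by rewrite -card_gt0 card_t -subn1 subn_gt0.
split => //; rewrite lt_neqAle (proj1 hf _ _ rK tK (subsetDl _ _)) andbT.
by apply/eqP => /(filtration_inj tK rK) e; move: vrho; rewrite -{1}e setD11.
Qed.

Lemma sub_chain_lt_coef0 k rho (x : chain) :
  sub_chain K f (lt_at (f rho)) k x -> x rho = 0.
Proof. by move=> hx; apply/eqP; apply: contraT => /hx [_ _]; rewrite /lt_at ltxx. Qed.

Lemma bd_sub_chain_coef0 k rho (x : chain) :
  sub_chain K f (le_at (f rho)) k.+1 x -> bd x rho = 0.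
Proof.
move=> hx; rewrite ffunE big1 // => s _.
have [->|/hx [sK cs fs]] := eqVneq (x s) 0; first by rewrite mul0r.
have [->|/(incidence_face sK) []] := eqVneq (incidence F s rho) 0; first by rewrite mulr0.
  by rewrite cs.
by move=> _ _ fsr; move: fs; rewrite /le_at leNgt fsr.
Qed.

Lemma sub_chain_bd_simplex n rho : rho \in K -> #|rho| = n.+2 ->
  sub_chain K f (lt_at (f rho)) n (bd (simplex_chain F rho)).
Proof.
by move=> rK cr s; rewrite bd_simplex_chain => /(incidence_face rK); rewrite cr => -[].
Qed.

Lemma sub_chain_drop_top k rho (x : chain) : rho \in K -> sub_chain K f (le_at (f rho)) k x ->
  sub_chain K f (lt_at (f rho)) k (x - chain_scale (x rho) (simplex_chain F rho)).
Proof.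
move=> rK hx s; rewrite !ffunE; case: (s =P rho) => [->|/eqP srho].
  by rewrite mulr1 subrr eqxx.
rewrite mulr0 subr0 => /hx [sK cs fs]; split => //.
move: fs; rewrite /le_at /lt_at lt_neqAle => ->; rewrite andbT.
by apply: contra_neq srho => /(filtration_inj sK rK).
Qed.

Lemma nonterminal_bd_simplex n rho : rho \in K -> #|rho| = n.+2 ->
  ~ terminal_simplex F K f rho ->
  exists2 w : chain, sub_chain K f (lt_at (f rho)) n.+1 w & bd w = bd (simplex_chain F rho).
Proof.
move=> rK cr nterm; apply: NNPP => no_w; apply: nterm; split => //.
exists (bd (simplex_chain F rho)); rewrite cr; split; [split|split].
- exact: sub_chain_bd_simplex.
- exact: bd_bd.
- by case=> w [hw hbw]; apply: no_w; exists w.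
- by exists (simplex_chain F rho); split => //; apply: sub_chain_simplex; rewrite /le_at.
Qed.

(* [simplex_chain rho - w] is a cycle of K^f_{f rho} whose coefficient on rho
   cannot be cancelled by boundaries of that complex. *)
Lemma birth_simplex_of_bd n rho (w : chain) : rho \in K -> #|rho| = n.+2 ->
  sub_chain K f (lt_at (f rho)) n.+1 w -> bd w = bd (simplex_chain F rho) ->
  birth_simplex F K f rho.
Proof.
move=> rK cr hw hbw; split => //; exists (simplex_chain F rho - w); rewrite cr; split.
  split; last by rewrite raddfB /= hbw subrr.
  apply: sub_chainB; first by apply: sub_chain_simplex; rewrite /le_at.
  by apply: sub_chainW hw => r; rewrite /lt_at /le_at => /ltW.
case=> beta [[hbeta _] [d [hd hbd]]].
have /eqP := bd_sub_chain_coef0 hd; rewrite hbd !ffunE eqxx.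
by rewrite (sub_chain_lt_coef0 hw) (sub_chain_lt_coef0 hbeta) !subr0 oner_eq0.
Qed.

Lemma birth_simplex_of_max_support n rho (e x : chain) :
  sub_chain K f (lt_at (f rho)) n.+1 e -> sub_chain K f (le_at (f rho)) n.+1 x ->
  x rho != 0 -> bd e = bd x -> birth_simplex F K f rho.
Proof.
move=> he hx xrho hex; have [rK cr _] := hx rho xrho.
pose x_top := chain_scale (x rho) (simplex_chain F rho).
apply: (@birth_simplex_of_bd n _ (chain_scale (x rho)^-1 (e - (x - x_top)))) => //.
  by apply/sub_chain_scale/sub_chainB => //; apply: sub_chain_drop_top.
rewrite bd_scale !raddfB /= bd_scale hex opprK addNKr.
by apply/ffunP => t; rewrite !ffunE mulKf.
Qed.

End Filtration.

Section Retraction.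
Variables (V : finType) (F : fieldType) (R : realType).
Variables (K : {set {set V}}) (f g : {set V} -> R) (n : nat) (b c : R).
Hypotheses (hK : simplicial_complex K) (hf : injective_filtration K f).
Hypothesis late_nonterminal : forall rho, rho \in K -> #|rho| = n.+2 ->
  f rho <= b -> c < g rho -> ~ terminal_simplex F K f rho.
Local Notation chain := {ffun {set V} -> F}.

(* Trade the f-latest simplex rho of x with g rho > c for a chain of
   f-earlier simplices with the same boundary. *)
Lemma retract_step t (x : chain) :
  sub_chain K f (le_at b) n.+1 x -> (forall s, x s != 0 -> c < g s -> f s < t) ->
  (exists s, (x s != 0) && (c < g s)) ->
  exists rho (x' : chain), [/\ rho \in K, f rho < t, sub_chain K f (le_at b) n.+1 x',
    (forall s, x' s != 0 -> c < g s -> f s < f rho) & bd x' = bd x].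
Proof.
move=> hx below_t late.
have [rho /andP [xrho grho] rho_max] := exists_arg_max f late.
have [rK cr frho] := hx rho xrho.
have [w hw hbw] := nonterminal_bd_simplex hK hf rK cr (late_nonterminal rK cr frho grho).
exists rho, (x - chain_scale (x rho) (simplex_chain F rho) + chain_scale (x rho) w).
split => //; first exact: below_t.
- apply: sub_chainD; first by apply/sub_chainB/sub_chain_scale/sub_chain_simplex.
  apply/sub_chain_scale/(sub_chainW _ hw) => r; rewrite /lt_at /le_at => /ltW r_le.
  exact: le_trans r_le frho.
- move=> s; rewrite !ffunE; case: (s =P rho) => [->|/eqP srho].
    by rewrite mulr1 subrr add0r (sub_chain_lt_coef0 hw) mulr0 eqxx.
  rewrite mulr0 subr0; have [ws|/hw [] //] := eqVneq (w s) 0.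
  rewrite ws mulr0 addr0 => xs gs; have [sK _ _] := hx s xs.
  rewrite lt_neqAle rho_max ?xs ?gs // andbT.
  by apply: contra_neq srho => /(filtration_inj hf sK rK).
- by rewrite raddfD raddfB /= !bd_scale hbw subrK.
Qed.

Lemma boundary_in_retract (x : chain) : sub_chain K f (le_at b) n.+1 x ->
  exists2 x' : chain, sub_chain K g (le_at c) n.+1 x' & bd x' = bd x.
Proof.
pose early t := [set s in K | f s < t].
suff retract N t (y : chain) : (#|early t| < N)%N -> sub_chain K f (le_at b) n.+1 y ->
    (forall s, y s != 0 -> c < g s -> f s < t) ->
    exists2 y' : chain, sub_chain K g (le_at c) n.+1 y' & bd y' = bd y.
  move=> hx; apply: (retract _ (b + 1) x (ltnSn _) hx) => s xs _.
  by have [_ _] := hx s xs; rewrite /le_at => fs; lra.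
elim: N t y => [|N IH] t y; first by rewrite ltn0.
move=> hN hy below_t.
have [/existsP late|on_time] := boolP [exists s, (y s != 0) && (c < g s)].
  have [rho [y' [rK rt hy' below_rho <-]]] := retract_step hy below_t late.
  apply: IH hy' below_rho; rewrite -ltnS; apply: leq_trans hN; apply: proper_card.
  apply/properP; split; last by exists rho; rewrite !inE ?rK ?rt ?ltxx.
  by apply/subsetP => s; rewrite !inE => /andP [-> /lt_trans]; apply.
exists y => // s ys; have [sK cs _] := hy s ys; split => //.
by rewrite /le_at leNgt; apply: contra on_time => gs; apply/existsP; exists s; rewrite ys.
Qed.

End Retraction.

Lemma is_inf_unique (R : realType) (S : R -> Prop) t t' : is_inf S t -> is_inf S t' -> t = t'.
Proof.
suff le_inf u u' : is_inf S u -> is_inf S u' -> u <= u'.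
  by move=> ht ht'; apply/le_anti/andP; split; apply: le_inf.
case=> lb _ [_ approx]; rewrite leNgt; apply/negP => lt.
have /approx [q [Sq]] : 0 < u - u' by rewrite subr_gt0.
by have := lb q Sq; lra.
Qed.

Section TerminationScale.
Variables (V : finType) (F : fieldType) (R : realType).
Variables (K : {set {set V}}) (f : {set V} -> R) (n : nat).
Implicit Types (z : {ffun {set V} -> F}) (q r t : R).

Lemma term_scale_min r t z : r <= t -> boundary_in K f (le_at t) n z ->
  (forall q, r <= q -> boundary_in K f (le_at q) n z -> t <= q) -> term_scale K f n r z t.
Proof.
move=> rt bt t_min; split=> [q [rq bq]|e e0]; first exact: t_min.
by exists t; split; [split | rewrite ltrDl].
Qed.

Lemma term_scale_le r t q z : term_scale K f n r z t -> ~ boundary_in K f (le_at r) n z ->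
  boundary_in K f (le_at q) n z -> t <= q.
Proof.
case=> lb _ nbr bq; have [rq|qr] := lerP r q; first exact: lb.
by case: nbr; apply: boundary_in_le (ltW qr) bq.
Qed.

End TerminationScale.

Section Decomposition.
Variables (V : finType) (F : fieldType) (R : realType).
Variables (K : {set {set V}}) (f : {set V} -> R) (n m : nat).
Variables (birth : 'I_m -> R) (death : 'I_m -> option R).
Variable rep : 'I_m -> {ffun {set V} -> F}.
Hypothesis hdec : interval_decomposition K f n birth death rep.
Local Notation chain := {ffun {set V} -> F}.
Implicit Types (z : chain) (q r : R).

Definition alive_at (r : R) (i : 'I_m) := (birth i <= r) && alive_end (death i) r.

Definition alive_combination (r : R) (c : 'I_m -> F) : chain :=
  [ffun s => \sum_(i | alive_at r i) c i * rep i s].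

Lemma boundary_in_dead_rep q i : ~~ alive_end (death i) q ->
  boundary_in K f (le_at q) n (rep i).
Proof.
have [_] := (proj1 hdec) i; case: (death i) => //= d [_ hd]; rewrite -leNgt => dq.
exact: boundary_in_le dq hd.
Qed.

Lemma alive_combination_split r q c :
  alive_combination r c = alive_combination q (fun i => if alive_at r i then c i else 0)
    + \sum_(i | alive_at r i && ~~ alive_at q i) chain_scale (c i) (rep i).
Proof.
apply/ffunP => s; rewrite !ffunE sum_ffunE (bigID (alive_at q)) /=.
congr (_ + _); last by apply: eq_bigr => i _; rewrite ffunE.
rewrite [RHS](bigID (alive_at r)) /= [X in _ = _ + X]big1 ?addr0.
  by apply: eq_big => [i|i /andP [-> _]] //; rewrite andbC.
by move=> i /andP [_ /negbTE ->]; rewrite mul0r.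
Qed.

Lemma decomposition_boundaryP r q c z :
  boundary_in K f (le_at r) n (z - alive_combination r c) -> r <= q ->
  boundary_in K f (le_at q) n z <->
  (forall i, alive_at r i -> c i != 0 -> ~~ alive_end (death i) q).
Proof.
move=> hz rq; have hzq := boundary_in_le rq hz.
split=> [bz i ri ci|dead]; last first.
  rewrite -[z](subrK (alive_combination r c)); apply: boundary_inD => //.
  rewrite /alive_combination combination_sum; apply: boundary_in_sum => i ri.
  have [->|/(dead i ri)/boundary_in_dead_rep] := eqVneq (c i) 0.
    by rewrite chain_scale0; apply: boundary_in0.
  exact: boundary_in_scale.
have bS : boundary_in K f (le_at q) n (alive_combination r c).
  by move: (boundary_inB bz hzq); rewrite opprB addrC subrK.
have [ri_q|] := boolP (alive_at q i); last first.
  by case/andP: ri => bir _; rewrite /alive_at (le_trans bir rq).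
pose c' j := if alive_at r j then c j else 0.
have bc' : boundary_in K f (le_at q) n (alive_combination q c').
  rewrite -[alive_combination q c'](addrK (\sum_(j | alive_at r j && ~~ alive_at q j)
    chain_scale (c j) (rep j))) -alive_combination_split; apply: boundary_inB => //.
  apply: boundary_in_sum => j /andP [rj qj]; apply/boundary_in_scale/boundary_in_dead_rep.
  by case/andP: rj => bjr _; move: qj; rewrite /alive_at (le_trans bjr rq).
have := (proj2 hdec q).1 c' bc' i ri_q.
by rewrite /c' ri => /eqP; rewrite (negbTE ci).
Qed.

Lemma term_scale_death r q z : cycle_in K f (le_at r) n z ->
  ~ boundary_in K f (le_at r) n z -> r <= q -> boundary_in K f (le_at q) n z ->
  exists j d, [/\ birth j <= r, death j = Some d, boundary_in K f (le_at d) n z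
                & term_scale K f n r z d].
Proof.
move=> zr nbr rq bq; have [c hc] := (proj2 (proj2 hdec r)) z zr.
have hzc : boundary_in K f (le_at r) n (z - alive_combination r c) := hc.
have [|j /andP [rj cj] j_max] := exists_arg_max (fun i => odflt 0 (death i))
    (P := fun i => alive_at r i && (c i != 0)).
  apply/existsP; apply: contraT => /existsPn none; case: nbr.
  by apply/(decomposition_boundaryP hzc (lexx r)) => i ri ci; have := none i; rewrite ri ci.
have dead_by q' := decomposition_boundaryP hzc (q := q').
have := (dead_by q rq).1 bq j rj cj; case dj: (death j) => [d|] //= _.
have /andP [bjr rd] := rj; rewrite dj /= in rd.
have bz_d : boundary_in K f (le_at d) n z.
  apply/(dead_by d (ltW rd)) => i ri ci; have := (dead_by q rq).1 bq i ri ci.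
  have := j_max i; rewrite ri ci dj; case: (death i) => //= d' /(_ isT) d'd _.
  by rewrite -leNgt.
exists j, d; split => //; apply: term_scale_min => // [|q' rq' bq']; first exact: ltW.
by have := (dead_by q' rq').1 bq' j rj cj; rewrite dj /= -leNgt.
Qed.

End Decomposition.

Section LongBar.
Variables (R : realType) (eps a b : R) (m m' : nat).
Variables (birthf : 'I_m -> R) (deathf : 'I_m -> option R).
Variables (birthg : 'I_m' -> R) (deathg : 'I_m' -> option R).
Variables (phi : 'I_m -> option 'I_m') (i0 : 'I_m) (j0 : 'I_m').
Hypothesis matching : stability_matching eps birthf deathf birthg deathg phi.
Hypothesis isolated : forall i, i != i0 ->
  a + 2 * eps < birthf i \/ (if deathf i is Some bi then bi < b - 2 * eps else False).
Hypothesis phi_i0 : phi i0 = Some j0.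
Hypotheses (eps_ge0 : 0 <= eps) (long : 4 * eps < b - a).

(* A g-bar [a_j, d) with a_j <= a + eps and d >= b - eps is too long to be
   left unmatched, and its partner can only be the isolated bar i0. *)
Lemma long_bar_matched j d : birthg j <= a + eps -> deathg j = Some d -> b - eps <= d ->
  j = j0.
Proof.
case: matching => _ close _ short_g bj dj bd.
have [/existsP [i /eqP phi_ij]|unmatched] := boolP [exists i, phi i == Some j].
  have [bij] := close i j phi_ij; rewrite dj; case di: (deathf i) => [x|] //= xd.
  suff ii0 : i = i0 by move: phi_ij; rewrite ii0 phi_i0 => -[].
  apply/eqP; apply: contraT => /isolated; rewrite di.
  by move: bij xd; rewrite !ler_norml => /andP [? ?] /andP [? ?] [?|?]; lra.
have : short_bar (birthg j) (deathg j) eps.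
  by apply: short_g => i phi_ij; move/existsP: unmatched; apply; exists i; rewrite phi_ij.
by rewrite dj /short_bar ler_norml => /andP [lo _]; exfalso; move: long; lra.
Qed.

Variables (V : finType) (F : fieldType) (K : {set {set V}}) (g : {set V} -> R).
Variables (n : nat) (repg : 'I_m' -> {ffun {set V} -> F}) (b' : R).
Hypothesis decg : interval_decomposition K g n birthg deathg repg.
Hypothesis death_j0 : deathg j0 = Some b'.

Lemma term_scale_long_class r q (z : {ffun {set V} -> F}) :
  cycle_in K g (le_at r) n z -> r <= a + eps ->
  (forall q, boundary_in K g (le_at q) n z -> b - eps <= q) ->
  boundary_in K g (le_at q) n z -> term_scale K g n r z b'.
Proof.
move=> zr ra late bq.
have nbr : ~ boundary_in K g (le_at r) n z by move/late; move: eps_ge0 long; lra.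
have rq : r <= q by have := late q bq; move: eps_ge0 long; lra.
have [j [d [bj dj bd td]]] := term_scale_death decg zr nbr rq bq.
have jj0 : j = j0 by apply: long_bar_matched dj (late d bd); apply: le_trans ra.
by move: dj; rewrite jj0 death_j0 => -[->].
Qed.

End LongBar.

Section TerminalSimplex.
Variables (V : finType) (F : fieldType) (R : realType).
Variables (K : {set {set V}}) (f g : {set V} -> R) (n : nat) (eps b : R).
Hypotheses (hK : simplicial_complex K) (hf : injective_filtration K f).
Hypothesis fg : sup_dist_le K f g eps.
Variables (e : {ffun {set V} -> F}) (sigma : {set V}).
Hypotheses (he : sub_chain K f (le_at b) n.+1 e) (e_sigma : e sigma != 0).
Hypothesis he_sigma : sub_chain K f (le_at (f sigma)) n.+1 e.
Hypothesis late_f : forall q, boundary_in K f (le_at q) n (bd e) -> b <= q.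
Hypothesis R_u : forall tau, birth_simplex F K f tau -> #|tau| = n.+2 -> b < f tau ->
  2 * eps <= `|f tau - b|.
Hypothesis R_l : forall tau, terminal_simplex F K f tau -> #|tau| = n.+2 -> f tau < b ->
  2 * eps <= `|f tau - b|.

Let sigmaK : sigma \in K. Proof. by have [] := he e_sigma. Qed.

Lemma top_simplex_level : f sigma = b.
Proof.
by have [_ _ ?] := he e_sigma; apply/le_anti/andP; split; [|apply: late_f; exists e].
Qed.

(* A simplex that is late for g yet present in K^f_b has f-value within
   2 eps below b, so it is not terminal. *)
Lemma boundary_in_at_sigma : boundary_in K g (le_at (g sigma)) n (bd e).
Proof.
have late_nonterminal rho : rho \in K -> #|rho| = n.+2 -> f rho <= b ->
    g sigma < g rho -> ~ terminal_simplex F K f rho.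
  move=> rK cr frho grho term_rho.
  have frho_lt : f rho < b.
    rewrite lt_neqAle frho andbT; apply: contraTneq grho => frb.
    by rewrite (filtration_inj hf rK sigmaK) ?top_simplex_level // ltxx.
  have /andP [_ g_rho] := sup_dist_le_bounds fg rK.
  have /andP [g_sigma _] := sup_dist_le_bounds fg sigmaK.
  have := R_l term_rho cr frho_lt; rewrite ltr0_norm ?subr_lt0 //.
  by move: top_simplex_level; lra.
have [x hx hbx] := boundary_in_retract hK hf late_nonterminal he.
by exists x.
Qed.

(* A simplex that is early for g yet beyond b in f would be a birth simplex
   within 2 eps above b. *)
Lemma not_boundary_in_before_sigma q : q < g sigma -> ~ boundary_in K g (le_at q) n (bd e).
Proof.
move=> q_lt [x [hx hbx]].
have x_neq0 : x != 0.
  apply/eqP => x0; suff : b <= b - 1 by lra.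
  by apply: late_f; rewrite -hbx x0 raddf0; apply: boundary_in0.
have [rho x_rho hx_f] := exists_top_simplex f hx x_neq0.
have [rK cr /= g_rho] := hx rho x_rho.
have /andP [f_rho _] := sup_dist_le_bounds fg rK.
have /andP [_ g_sigma] := sup_dist_le_bounds fg sigmaK.
case: (ltgtP (f rho) b) => [lt_b|gt_b|eq_b].
- by have := late_f (ex_intro _ x (conj hx_f hbx)); rewrite leNgt lt_b.
- have e_early : sub_chain K f (lt_at (f rho)) n.+1 e.
    by apply: sub_chainW he => r; rewrite /le_at /lt_at => /le_lt_trans; apply.
  have := R_u (birth_simplex_of_max_support hK hf e_early hx_f x_rho (esym hbx)) cr gt_b.
  rewrite gtr0_norm ?subr_gt0 //; rewrite /le_at in g_rho; move: top_simplex_level; lra.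
- have rho_sigma : rho = sigma.
    by apply: (filtration_inj hf rK sigmaK); rewrite eq_b top_simplex_level.
  by move: g_rho; rewrite /le_at rho_sigma leNgt q_lt.
Qed.

Lemma term_scale_at_sigma r : r <= g sigma -> term_scale K g n r (bd e) (g sigma).
Proof.
move=> r_le; apply: term_scale_min r_le boundary_in_at_sigma _ => q _ bq.
have [//|q_lt] := lerP (g sigma) q.
by case: (not_boundary_in_before_sigma q_lt bq).
Qed.

End TerminalSimplex.

Unset Implicit Arguments. Set Strict Implicit. Set Printing Implicit Defensive.

Theorem theorem4p2
  (V : finType) (F : fieldType) (R : realType)
  (K : {set {set V}}) (f g : {set V} -> R) (n : nat) (eps : R)
  (* barcode of f in degree n, given by an interval decomposition *)
  (m : nat) (birthf : 'I_m -> R) (deathf : 'I_m -> option R)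
  (repf : 'I_m -> {ffun {set V} -> F})
  (* barcode of g in degree n, given by an interval decomposition *)
  (m' : nat) (birthg : 'I_m' -> R) (deathg : 'I_m' -> option R)
  (repg : 'I_m' -> {ffun {set V} -> F})
  (phi : 'I_m -> option 'I_m')
  (i0 : 'I_m) (j0 : 'I_m') (a b a' b' : R) (alpha : {ffun {set V} -> F}) :
  simplicial_complex K ->
  injective_filtration K f ->
  (0 < n)%N ->
  interval_decomposition K f n birthf deathf repf ->
  (* [a,b) (b finite) is a bar, represented by the n-cycle alpha, whose class
     in H_n(K^f_a) is nontrivial, born at a and terminated at b *)
  birthf i0 = a -> deathf i0 = Some b -> repf i0 = alpha ->
  cycle_in K f (le_at a) n alpha ->
  ~ boundary_in K f (le_at a) n alpha ->
  birth_scale K f n a alpha a ->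
  term_scale K f n a alpha b ->
  eps < (b - a) / 4 ->
  (* every other bar [a_i, b_i) has a_i > a + 2 eps or b_i < b - 2 eps *)
  (forall i, i != i0 ->
     a + 2 * eps < birthf i \/
     (if deathf i is Some bi then bi < b - 2 * eps else False)) ->
  injective_filtration K g ->
  sup_dist_le K f g eps ->
  interval_decomposition K g n birthg deathg repg ->
  stability_matching eps birthf deathf birthg deathg phi ->
  (* the matching sends [a,b) to [a',b') *)
  phi i0 = Some j0 -> birthg j0 = a' -> deathg j0 = Some b' ->
  (* (1) the class of alpha in {H_n(K^g_r)}_r (r = the scale at which alpha
         enters K^g) terminates at b' *)
  (forall r, sub_chain K g (le_at r) n alpha ->
     (forall q, q < r -> ~ sub_chain K g (le_at q) n alpha) ->
     term_scale K g n r alpha b')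
  /\
  (* (2) if eps <= min(R_u, R_l)/2, the terminating simplices coincide *)
  ((forall tau, birth_simplex F K f tau -> #|tau| = n.+2 -> b < f tau ->
       2 * eps <= `|f tau - b|) ->
   (forall tau, terminal_simplex F K f tau -> #|tau| = n.+2 -> f tau < b ->
       2 * eps <= `|f tau - b|) ->
   exists2 sigma, sigma \in K & f sigma = b /\ g sigma = b').
Proof.
move=> hK hf _ decf _ death_i0 rep_i0 alpha_cyc alpha_nb _ term_f eps_small isolated
  _ fg decg matching phi_i0 _ death_j0.
have alpha_neq0 : alpha != 0.
  by apply/eqP => alpha0; apply: alpha_nb; rewrite alpha0; apply: boundary_in0.
have [s0 /(proj1 alpha_cyc) [s0K _ _]] := support_neq0 alpha_neq0.
have eps_ge0 : 0 <= eps := le_trans (normr_ge0 _) (fg s0 s0K).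
have long : 4 * eps < b - a by lra.
have late_f q : boundary_in K f (le_at q) n alpha -> b <= q := term_scale_le term_f alpha_nb.
have late_g q : boundary_in K g (le_at q) n alpha -> b - eps <= q.
  by move/(boundary_in_shift (sup_dist_leC fg))/late_f; lra.
have [e [he hbe]] : boundary_in K f (le_at b) n alpha.
  by have [_] := (proj1 decf) i0; rewrite death_i0 rep_i0 => -[].
have term_g r : sub_chain K g (le_at r) n alpha ->
    (forall q, q < r -> ~ sub_chain K g (le_at q) n alpha) -> term_scale K g n r alpha b'.
  move=> hr r_min; have bd_alpha := boundary_in_shift fg (ex_intro _ e (conj he hbe)).
  apply: (term_scale_long_class matching isolated phi_i0 eps_ge0 long decg death_j0
    (conj hr (proj2 alpha_cyc)) _ late_g bd_alpha).
  by rewrite leNgt; apply/negP => /r_min; apply; exact (sub_chain_shift fg (proj1 alpha_cyc)).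
split => // R_u R_l.
have e_neq0 : e != 0 by apply: contraNneq alpha_neq0 => e0; rewrite -hbe e0 raddf0.
have [sigma e_sigma he_sigma] := exists_top_simplex f he e_neq0.
have late_e q : boundary_in K f (le_at q) n (bd e) -> b <= q by rewrite hbe; apply: late_f.
have f_sigma := top_simplex_level he e_sigma he_sigma late_e.
have [s1 alpha_s1 entry] := exists_top_simplex g (proj1 alpha_cyc) alpha_neq0.
have [[s1K _ f_s1] [sigmaK _ _]] := (proj1 alpha_cyc s1 alpha_s1, he sigma e_sigma).
have s1_sigma : g s1 <= g sigma.
  have /andP [_ ?] := sup_dist_le_bounds fg s1K.
  have /andP [? _] := sup_dist_le_bounds fg sigmaK.
  by rewrite /le_at in f_s1; lra.
have := term_scale_at_sigma hK hf fg he e_sigma he_sigma late_e R_u R_l s1_sigma.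
rewrite hbe => t_sigma; exists sigma => //; split => //.
apply: is_inf_unique t_sigma (term_g _ entry _).
by move=> q q_lt /(_ s1 alpha_s1) [_ _]; rewrite /le_at leNgt q_lt.
Qed.
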